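(* Let $(a(i))_{i\in\mathbb N}$ be a stationary process taking values in a finite set $S=\{s_1,\dots,s_N\}\subset\mathbb R$, $N\ge2$, with $\mathbb E[a(1)]=0$, satisfying: there are $C>0$, $\alpha\in[0,1)$ such that for all $k\in\mathbb N$, $2\le l\le k$ and $i_1\le\dots\le i_k$, $$\max_{j_1,\dots,j_k}\Big|\mathbb P\big(a(i_k)=s_{j_k},\dots,a(i_l)=s_{j_l}\,\big|\,a(i_{l-1})=s_{j_{l-1}},\dots,a(i_1)=s_{j_1}\big)-\mathbb P\big(a(i_k)=s_{j_k},\dots,a(i_l)=s_{j_l}\big)\Big|\le C\alpha^{i_l-i_{l-1}}.$$ Assume in addition that $\mathbb E[a(i_1)\cdots a(i_r)]=0$ for every odd $r\in\mathbb N$ and all $(i_1,\dots,i_r)\in\mathbb N^r$. Then for every $k\in\mathbb N$ there is a constant $C_k$ such that for all $i_1\le\dots\le i_{2k}$, $$\big|\mathbb E[a(i_1)\cdots a(i_{2k})]\big|\le C_k\,\alpha^{\max\{i_{2l}-i_{2l-1}:\,l=1,\dots,k\}}\le C_k\prod_{l=1}^k\big(\alpha^{1/k}\big)^{i_{2l}-i_{2l-1}}.$$ *)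

(* A stationary finite-valued process is modelled
   elementarily: a sample space Omega, a finitely additive probability P defined
   on all events, and random variables a i : Omega -> R with values in the list S. *)
From Stdlib Require Import Reals List Sorting.Sorted Arith.
Import ListNotations.
Open Scope R_scope.

Section Defs.
Context {Omega : Type}.

Definition fa_prob (P : (Omega -> Prop) -> R) : Prop :=
  (forall A, 0 <= P A) /\
  P (fun _ => True) = 1 /\
  (forall A B : Omega -> Prop, (forall w, A w <-> B w) -> P A = P B) /\
  (forall A B : Omega -> Prop, (forall w, A w -> B w -> False) ->
      P (fun w => A w \/ B w) = P A + P B).

Definition cyl (a : nat -> Omega -> R) (is : list nat) (xs : list R) : Omega -> Prop :=
  fun w => Forall2 (fun i x => a i w = x) is xs.

Definition sumL (l : list R) : R := fold_right Rplus 0 l.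

(* E[ 1_ev * prod_{i in is} a(i) ] for S-valued variables, computed as the sum over
   all value tuples: sum_{x} (prod x) * P(ev /\ a(i_t) = x_t for all t). *)
Fixpoint Eprod_on (P : (Omega -> Prop) -> R) (a : nat -> Omega -> R) (S : list R)
    (is : list nat) (ev : Omega -> Prop) : R :=
  match is with
  | [] => P ev
  | i :: is' => sumL (map (fun s => s * Eprod_on P a S is' (fun w => ev w /\ a i w = s)) S)
  end.

Definition Eprod P a S (is : list nat) : R := Eprod_on P a S is (fun _ => True).

Definition stationary (P : (Omega -> Prop) -> R) (a : nat -> Omega -> R) : Prop :=
  forall (is : list nat) (xs : list R) (h : nat),
    P (cyl a is xs) = P (cyl a (map (fun i => (i + h)%nat) is) xs).

End Defs.

Fixpoint pair_gaps (l : list nat) : list nat :=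
  match l with
  | x :: y :: r => (y - x)%nat :: pair_gaps r
  | _ => []
  end.

Definition maxL (l : list nat) : nat := fold_right Nat.max 0%nat l.
Definition prodL (l : list R) : R := fold_right Rmult 1 l.

(* Let the indices i_1 <= ... <= i_2k be split at the pair
   (i_{2l-1}, i_{2l}) with the largest gap M = i_{2l} - i_{2l-1}:
   is = l1 ++ r with l1 = [i_1; ...; i_{2l-1}] of odd length and
   r = [i_{2l}; ...; i_{2k}].  Since odd moments vanish, E[prod l1] = 0, so
     E[prod is] = E[prod l1 * prod r] - E[prod l1] * E[prod r],
   a covariance.  Expanding both expectations over the finitely many value
   tuples, this covariance is a weighted sum of cylinder covariances
   P(A /\ B) - P(A) P(B), with total weight at most (sum_{s in S} |s|)^(2k);
   and the mixing hypothesis bounds every cylinder covariance by C alpha^M.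
   The second inequality is elementary: with beta^k = alpha and k gaps d_l,
   alpha^M = (beta^M)^k <= prod_l beta^(d_l) since 0 <= beta <= 1. *)
From Stdlib Require Import Reals List Sorting.Sorted Arith Lia Lra Classical.
Import ListNotations.
Open Scope R_scope.

Definition respects_equiv {Omega : Type} (g : (Omega -> Prop) -> R) : Prop :=
  forall A B : Omega -> Prop, (forall w, A w <-> B w) -> g A = g B.

(* The total absolute mass of the value set; it weighs each index in the
   expansion of a product moment. *)
Definition sum_abs (S : list R) : R := sumL (map Rabs S).

Lemma sum_abs_ge0 (S : list R) : 0 <= sum_abs S.
Proof.
  unfold sum_abs; induction S as [|s S IH]; simpl; [lra|].
  pose proof (Rabs_pos s); lra.
Qed.

Lemma sumL_abs_bound (f : R -> R) (B : R) (L : list R) :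
  (forall s, In s L -> Rabs (f s) <= Rabs s * B) ->
  Rabs (sumL (map f L)) <= sumL (map Rabs L) * B.
Proof.
  induction L as [|s L IH]; intros H; simpl.
  - rewrite Rabs_R0; lra.
  - eapply Rle_trans; [apply Rabs_triang|].
    assert (Hs := H s (or_introl eq_refl)).
    assert (Rabs (sumL (map f L)) <= sumL (map Rabs L) * B)
      by (apply IH; intros; apply H; simpl; auto).
    lra.
Qed.

Lemma sumL_lin (f g : R -> R) (c : R) (L : list R) :
  sumL (map f L) - c * sumL (map g L) = sumL (map (fun s => f s - c * g s) L).
Proof. induction L as [|s L IH]; simpl; [ring|]. rewrite <- IH. ring. Qed.

Section IteratedExpectation.
Context {Omega : Type} (a : nat -> Omega -> R) (S : list R).

Lemma Eprod_on_app (g : (Omega -> Prop) -> R) (l1 l2 : list nat) ev :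
  Eprod_on g a S (l1 ++ l2) ev = Eprod_on (Eprod_on g a S l2) a S l1 ev.
Proof.
  revert ev; induction l1 as [|i l1 IH]; intros ev; simpl; auto.
  f_equal; apply map_ext; intro s; rewrite IH; auto.
Qed.

Lemma Eprod_on_lin (g1 g2 : (Omega -> Prop) -> R) (c : R) (l : list nat) ev :
  Eprod_on g1 a S l ev - c * Eprod_on g2 a S l ev =
  Eprod_on (fun e => g1 e - c * g2 e) a S l ev.
Proof.
  revert ev; induction l as [|i l IH]; intros ev; simpl; auto.
  rewrite sumL_lin; f_equal; apply map_ext; intro s.
  rewrite <- IH; ring.
Qed.

Lemma Eprod_on_respects_equiv (g : (Omega -> Prop) -> R) (l : list nat) :
  respects_equiv g -> respects_equiv (Eprod_on g a S l).
Proof.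
  intros Hg; induction l as [|i l IH]; intros A B HAB; simpl; [auto|].
  f_equal; apply map_ext; intro s; f_equal; apply IH; intro w; rewrite HAB; tauto.
Qed.

Lemma Eprod_on_restrict (g : (Omega -> Prop) -> R) (l : list nat) ev :
  respects_equiv g ->
  Eprod_on g a S l ev =
  Eprod_on (fun e => g (fun w => ev w /\ e w)) a S l (fun _ => True).
Proof.
  intros Hg.
  assert (Hgen : forall ev', Eprod_on g a S l (fun w => ev w /\ ev' w) =
    Eprod_on (fun e => g (fun w => ev w /\ e w)) a S l ev').
  { induction l as [|i l IH]; intros ev'; simpl; auto.
    f_equal; apply map_ext; intro s; rewrite <- IH; f_equal.
    apply Eprod_on_respects_equiv; auto; tauto. }
  rewrite <- Hgen; apply Eprod_on_respects_equiv; auto; tauto.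
Qed.

Lemma Eprod_on_bound (g : (Omega -> Prop) -> R) (K : R) (l : list nat) ev :
  respects_equiv g -> 0 <= K ->
  (forall xs, length xs = length l -> (forall z, In z xs -> In z S) ->
     Rabs (g (fun w => ev w /\ cyl a l xs w)) <= K) ->
  Rabs (Eprod_on g a S l ev) <= sum_abs S ^ length l * K.
Proof.
  intros Hg HK; revert ev; induction l as [|i l IH]; intros ev H; simpl.
  - rewrite Rmult_1_l, (Hg ev (fun w => ev w /\ cyl a [] [] w)).
    + apply H; simpl; tauto.
    + intro w; unfold cyl; split; [split; auto|tauto].
  - rewrite Rmult_assoc; apply sumL_abs_bound; intros s Hs.
    rewrite Rabs_mult; apply Rmult_le_compat_l; [apply Rabs_pos|].
    apply IH; intros xs Hl Hin.
    rewrite (Hg _ (fun w => ev w /\ cyl a (i :: l) (s :: xs) w)).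
    + apply H; simpl; [lia|]. intros z [<-|Hz]; auto.
    + intro w; unfold cyl; split.
      * intros [[H1 H2] H3]; auto.
      * intros [H1 H2]; inversion H2; subst; tauto.
Qed.

End IteratedExpectation.

Section Covariance.
Context {Omega : Type} (P : (Omega -> Prop) -> R) (HP : fa_prob P).

Lemma fa_prob_mono (A B : Omega -> Prop) : (forall w, A w -> B w) -> P A <= P B.
Proof.
  destruct HP as (Pnn & _ & Pext & Padd); intros HAB.
  rewrite (Pext B (fun w => A w \/ (B w /\ ~ A w))).
  - rewrite Padd; [pose proof (Pnn (fun w => B w /\ ~ A w)); lra|].
    intros w h1 [_ h2]; tauto.
  - intro w; split; [|intros [h|[h _]]; auto].
    intro hb; destruct (classic (A w)); tauto.
Qed.

Lemma fa_prob_le1 (A : Omega -> Prop) : P A <= 1.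
Proof.
  destruct HP as (_ & P1 & _); rewrite <- P1; apply fa_prob_mono; auto.
Qed.

(* A uniform bound on the conditional probability deviation bounds the
   covariance of two events (trivially so when P A = 0). *)
Lemma cov_of_conditional (A B : Omega -> Prop) (K : R) : 0 <= K ->
  (0 < P A -> Rabs (P (fun w => B w /\ A w) / P A - P B) <= K) ->
  Rabs (P (fun w => A w /\ B w) - P A * P B) <= K.
Proof.
  destruct HP as (Pnn & _ & Pext & _); intros HK Hcond.
  rewrite (Pext _ (fun w => B w /\ A w)) by tauto.
  assert (Hsub : P (fun w => B w /\ A w) <= P A) by (apply fa_prob_mono; tauto).
  pose proof (Pnn (fun w => B w /\ A w)).
  destruct (Pnn A) as [HA|HA].
  - replace (P (fun w => B w /\ A w) - P A * P B)
      with (P A * (P (fun w => B w /\ A w) / P A - P B)) by (field; lra).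
    rewrite Rabs_mult, (Rabs_right (P A)) by lra.
    pose proof (fa_prob_le1 A); pose proof (Hcond HA).
    pose proof (Rabs_pos (P (fun w => B w /\ A w) / P A - P B)); nra.
  - replace (P (fun w => B w /\ A w) - P A * P B) with 0 by (rewrite <- HA in *; lra).
    rewrite Rabs_R0; auto.
Qed.

Lemma Eprod_cov_bound (a : nat -> Omega -> R) (S : list R) (l r : list nat) (K : R) :
  0 <= K ->
  (forall xs ys, length xs = length l -> length ys = length r ->
     (forall z, In z xs -> In z S) -> (forall z, In z ys -> In z S) ->
     Rabs (P (fun w => cyl a l xs w /\ cyl a r ys w)
           - P (cyl a l xs) * P (cyl a r ys)) <= K) ->
  Rabs (Eprod P a S (l ++ r) - Eprod P a S l * Eprod P a S r)
    <= sum_abs S ^ (length l + length r) * K.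
Proof.
  destruct HP as (_ & _ & Pext & _); intros HK Hcyl.
  assert (HT := sum_abs_ge0 S).
  unfold Eprod; rewrite Eprod_on_app, Rmult_comm, Eprod_on_lin, pow_add, Rmult_assoc.
  set (c := Eprod_on P a S r (fun _ => True)).
  apply Eprod_on_bound.
  - intros A B HAB; rewrite (Eprod_on_respects_equiv a S P r Pext A B HAB), (Pext A B HAB); auto.
  - pose proof (pow_le _ (length r) HT); nra.
  - intros xs Hxl Hxs; set (A := fun w => True /\ cyl a l xs w).
    rewrite (Eprod_on_restrict a S P r A Pext), (Rmult_comm c); unfold c.
    rewrite Eprod_on_lin; apply Eprod_on_bound; auto.
    + intros B1 B2 HB; rewrite (Pext B1 B2 HB).
      rewrite (Pext (fun w => A w /\ B1 w) (fun w => A w /\ B2 w)); auto.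
      intro w; rewrite (HB w); tauto.
    + intros ys Hyl Hys; unfold A.
      rewrite (Pext _ (fun w => cyl a l xs w /\ cyl a r ys w)) by tauto.
      rewrite (Pext (fun w => True /\ cyl a l xs w) (cyl a l xs)) by tauto.
      rewrite (Pext (fun w => True /\ cyl a r ys w) (cyl a r ys)) by tauto.
      apply Hcyl; auto.
Qed.

End Covariance.

Section Mixing.
Context {Omega : Type} (P : (Omega -> Prop) -> R) (a : nat -> Omega -> R)
  (S : list R) (C alpha : R).
Hypothesis HP : fa_prob P.
Hypothesis HC : 0 < C.
Hypothesis Ha0 : 0 <= alpha.
Hypothesis Hmix : forall (p q : list nat) (i j : nat) (xp xq : list R) (x y : R),
  Sorted le (p ++ i :: j :: q) ->
  length p = length xp -> length q = length xq ->
  (forall z, In z (xp ++ x :: y :: xq) -> In z S) ->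
  0 < P (cyl a (p ++ [i]) (xp ++ [x])) ->
  Rabs (P (fun w => cyl a (j :: q) (y :: xq) w /\ cyl a (p ++ [i]) (xp ++ [x]) w)
          / P (cyl a (p ++ [i]) (xp ++ [x]))
        - P (cyl a (j :: q) (y :: xq)))
    <= C * alpha ^ (j - i).

Lemma mixing_cylinder_cov (p q : list nat) (i j : nat) :
  Sorted le (p ++ i :: j :: q) ->
  forall xs ys, length xs = length (p ++ [i]) -> length ys = length (j :: q) ->
  (forall z, In z xs -> In z S) -> (forall z, In z ys -> In z S) ->
  Rabs (P (fun w => cyl a (p ++ [i]) xs w /\ cyl a (j :: q) ys w)
        - P (cyl a (p ++ [i]) xs) * P (cyl a (j :: q) ys)) <= C * alpha ^ (j - i).
Proof.
  intros Hsort xs ys Hxl Hyl Hxs Hys.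
  rewrite length_app in Hxl; simpl in Hxl, Hyl.
  assert (Hxne : xs <> []) by (intros ->; simpl in Hxl; lia).
  destruct (exists_last Hxne) as (xp & x & ->).
  destruct ys as [|y xq]; [simpl in Hyl; lia|].
  rewrite length_app in Hxl; simpl in Hxl, Hyl.
  apply cov_of_conditional; auto.
  - pose proof (pow_le alpha (j - i) Ha0); nra.
  - apply Hmix; auto; try lia.
    intros z Hz; apply in_app_or in Hz; destruct Hz as [Hz|[<-|Hz]].
    + apply Hxs, in_or_app; auto.
    + apply Hxs, in_or_app; simpl; auto.
    + apply Hys; auto.
Qed.

End Mixing.

Lemma split_at_max_gap (n : nat) (l : list nat) : length l = (2 * S n)%nat ->
  exists p i j q, l = p ++ i :: j :: q /\ Nat.odd (length (p ++ [i])) = true /\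
    (j - i)%nat = maxL (pair_gaps l).
Proof.
  revert l; induction n as [|n IH]; intros l Hl;
    destruct l as [|x [|y r]]; simpl in Hl; try lia.
  - destruct r; simpl in Hl; try lia.
    exists [], x, y, []; simpl; repeat split; lia.
  - destruct (IH r ltac:(lia)) as (p & i & j & q & -> & Hodd & Hm).
    unfold maxL; simpl; fold (maxL (pair_gaps (p ++ i :: j :: q))); rewrite <- Hm.
    destruct (Nat.le_ge_cases (y - x) (j - i)).
    + exists (x :: y :: p), i, j, q; simpl; repeat split; auto; lia.
    + exists [], x, y, (p ++ i :: j :: q); simpl; repeat split; lia.
Qed.

Lemma pair_gaps_length (n : nat) (l : list nat) :
  length l = (2 * n)%nat -> length (pair_gaps l) = n.
Proof.
  revert l; induction n as [|n IH]; intros l Hl;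
    destruct l as [|x [|y r]]; simpl in Hl; try lia; auto.
  simpl; rewrite (IH r); lia.
Qed.

Lemma maxL_ge (l : list nat) (d : nat) : In d l -> (d <= maxL l)%nat.
Proof.
  induction l as [|x l IH]; simpl; intros H; [tauto|].
  destruct H as [<-|H]; [lia|]; apply IH in H; lia.
Qed.

Lemma pow_bound_le_prodL (beta : R) (M : nat) (l : list nat) : 0 <= beta <= 1 ->
  (forall d, In d l -> (d <= M)%nat) ->
  (beta ^ M) ^ length l <= prodL (map (fun d => beta ^ d) l).
Proof.
  intros Hb; induction l as [|d l IH]; intros H; simpl; [lra|].
  assert (Hd : beta ^ M <= beta ^ d).
  { replace M with (d + (M - d))%nat by (pose proof (H d (or_introl eq_refl)); lia).
    rewrite pow_add.
    assert (beta ^ (M - d) <= 1) by (rewrite <- (pow1 (M - d)); apply pow_incr; lra).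
    pose proof (pow_le beta d ltac:(lra)); nra. }
  apply Rmult_le_compat; auto.
  - apply pow_le; lra.
  - apply pow_le, pow_le; lra.
  - apply IH; intros; apply H; simpl; auto.
Qed.

Lemma pow_maxL_le_prodL (beta : R) (l : list nat) : 0 <= beta <= 1 ->
  (beta ^ length l) ^ maxL l <= prodL (map (fun d => beta ^ d) l).
Proof.
  intros Hb; rewrite <- pow_mult, Nat.mul_comm, pow_mult.
  apply pow_bound_le_prodL; auto; apply maxL_ge.
Qed.

Theorem mainTheorem6
  (Omega : Type) (P : (Omega -> Prop) -> R) (a : nat -> Omega -> R)
  (S : list R) (C alpha : R)
  (HP : fa_prob P)
  (HS : NoDup S) (HN : (2 <= length S)%nat)
  (Hval : forall i w, In (a i w) S)
  (Hstat : stationary P a)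
  (Hmean : Eprod P a S [1%nat] = 0)
  (HC : 0 < C) (Ha0 : 0 <= alpha) (Ha1 : alpha < 1)
  (Hmix : forall (p q : list nat) (i j : nat) (xp xq : list R) (x y : R),
      Sorted le (p ++ i :: j :: q) ->
      length p = length xp -> length q = length xq ->
      (forall z, In z (xp ++ x :: y :: xq) -> In z S) ->
      0 < P (cyl a (p ++ [i]) (xp ++ [x])) ->
      Rabs (P (fun w => cyl a (j :: q) (y :: xq) w /\ cyl a (p ++ [i]) (xp ++ [x]) w)
              / P (cyl a (p ++ [i]) (xp ++ [x]))
            - P (cyl a (j :: q) (y :: xq)))
        <= C * alpha ^ (j - i))
  (Hodd : forall is : list nat, Nat.odd (length is) = true -> Eprod P a S is = 0) :
  forall k : nat, (1 <= k)%nat ->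
  exists Ck : R, forall is : list nat,
    length is = (2 * k)%nat -> Sorted le is ->
    Rabs (Eprod P a S is) <= Ck * alpha ^ (maxL (pair_gaps is)) /\
    (forall beta : R, 0 <= beta -> beta ^ k = alpha ->
       Ck * alpha ^ (maxL (pair_gaps is))
         <= Ck * prodL (map (fun d => beta ^ d) (pair_gaps is))).
Proof.
  intros k Hk; exists (C * sum_abs S ^ (2 * k)); intros is Hlen Hsort.
  assert (HCk : 0 <= C * sum_abs S ^ (2 * k))
    by (pose proof (pow_le _ (2 * k) (sum_abs_ge0 S)); nra).
  split.
  - destruct k as [|n]; [lia|].
    destruct (split_at_max_gap n is Hlen) as (p & i & j & q & Heq & Hodd1 & <-).
    assert (Hsplit : is = (p ++ [i]) ++ j :: q) by (rewrite Heq, <- app_assoc; auto).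
    assert (Hlens : (length (p ++ [i]) + length (j :: q) = 2 * Datatypes.S n)%nat)
      by (rewrite <- length_app, <- Hsplit; auto).
    assert (Hcov := Eprod_cov_bound P HP a S (p ++ [i]) (j :: q) (C * alpha ^ (j - i))
      ltac:(pose proof (pow_le alpha (j - i) Ha0); nra)
      (mixing_cylinder_cov P a S C alpha HP HC Ha0 Hmix p q i j ltac:(rewrite <- Heq; auto))).
    rewrite Hlens, (Hodd _ Hodd1), Rmult_0_l, Rminus_0_r, <- Hsplit in Hcov.
    replace (C * sum_abs S ^ (2 * Datatypes.S n) * alpha ^ (j - i))
      with (sum_abs S ^ (2 * Datatypes.S n) * (C * alpha ^ (j - i))) by ring; auto.
  - intros beta Hb Hbk; apply Rmult_le_compat_l; auto.
    assert (Hb1 : beta <= 1).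
    { destruct (Rle_lt_dec beta 1) as [|Hgt]; auto.
      pose proof (Rlt_pow_R1 beta k Hgt ltac:(lia)); lra. }
    rewrite <- Hbk, <- (pair_gaps_length k is Hlen) at 1.
    apply pow_maxL_le_prodL; lra.
Qed.
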